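(* Let $G$ be a simple undirected graph with adjacency matrix $A$, and let $0<\tau<\tau_c^{(1)}(G)$, so that $R_0(G,\tau)=\tau\lambda_1(A)<1$. Then for every initial condition $V(0)\in[0,1]^N$ and every $t\ge 0$, $$y(t;G,\tau,V(0)) \le y(t;G,\tau,u) \le e^{(R_0(G,\tau)-1)t}.$$ Consequently, for every $r\in(0,1)$, the upper-transition time satisfies $$\overline{T}(r)\le \frac{1}{1-R_0(G,\tau)}\log\left(\frac1r\right).$$
   Context: NIMFA SIS process (time rescaled so that the curing rate is $1$): for a simple undirected graph with $N\times N$ symmetric $0/1$ adjacency matrix $A$ (zero diagonal) and effective infection rate $\tau>0$, the infection probabilities $v_i(t)\in[0,1]$ evolve by $\frac{dv_i}{dt} = -v_i + \tau(1-v_i)\sum_{j=1}^N a_{ij}v_j$, $i=1,\dots,N$, with initial condition $V(0)\in[0,1]^N$. $y(t;G,\tau,V(0))=\frac1N\sum_i v_i(t)$ denotes the prevalence of this process. $u$ is the all-one vector. $\lambda_1(A)$ is the largest eigenvalue of $A$, $\tau_c^{(1)}(G)=1/\lambda_1(A)$, and $R_0(G,\tau)=\tau\lambda_1(A)$. When $\tau\le\tau_c^{(1)}(G)$ the steady-state prevalence is $y_\infty=0$. The upper-transition time is $\overline{T}(r)=\min\{t\ge 0: |y(t;G,\tau,V(0))-y_\infty|\le r \text{ for all } V(0) \text{ with } v_i(0)\in[r,1]\ \forall i\}$. *)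

From HB Require Import structures.
From mathcomp Require Import all_boot all_order all_algebra.
From mathcomp Require Import all_classical all_reals all_analysis.
Set Implicit Arguments. Unset Strict Implicit. Unset Printing Implicit Defensive.
Import Order.TTheory GRing.Theory Num.Theory.
Import numFieldNormedType.Exports.
Local Open Scope classical_set_scope.
Local Open Scope ring_scope.

Definition simple_adjacency (R : realType) (N : nat) (A : 'M[R]_N) : Prop :=
  [/\ forall i j, A i j = A j i,
      forall i, A i i = 0 &
      forall i j, A i j = 0 \/ A i j = 1].

Definition largest_eigenvalue (R : realType) (N : nat) (A : 'M[R]_N) (lam : R)
  : Prop :=
  eigenvalue A lam /\ (forall a, eigenvalue A a -> a <= lam).

Definition nimfa_solution (R : realType) (N : nat) (A : 'M[R]_N) (tau : R)
  (v : R -> 'I_N -> R) : Prop :=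
  (forall i : 'I_N, (fun s : R => v s i) x @[x --> (0:R)^'+] --> v 0 i) /\
  (forall (i : 'I_N) (t : R), 0 < t ->
     is_derive t (1 : R) (fun s : R => v s i)
       (- v t i + tau * (1 - v t i) * \sum_(j < N) A i j * v t j)).

Definition prevalence (R : realType) (N : nat) (v : R -> 'I_N -> R) (t : R) : R :=
  (\sum_(i < N) v t i) / N%:R.

From HB Require Import structures.
From mathcomp Require Import all_boot all_order all_algebra.
From mathcomp Require Import all_classical all_reals all_analysis.
From mathcomp Require Import complex sesquilinear spectral.
From mathcomp Require Import ring lra.
Import Order.TTheory GRing.Theory Num.Theory.
Import numFieldNormedType.Exports.
Local Open Scope classical_set_scope.
Local Open Scope ring_scope.

(* The NIMFA vector field is cooperative, so solutions stay in [0,1]^N and are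
   ordered like their initial values; this gives y(t; V(0)) <= y(t; u).  For
   the exponential bound, the energy E = sum_i v_i^2 of a solution in [0,1]^N
   satisfies E' = 2 sum_i v_i (-v_i + tau (1 - v_i) (A v)_i)
   <= 2 (tau v^T A v - E) <= 2 (R_0 - 1) E, by the Rayleigh bound
   v^T A v <= lambda_1 |v|^2.  Hence E(t) <= N e^(2 (R_0 - 1) t), and
   Cauchy-Schwarz gives y(t) <= sqrt(E(t) / N) <= e^((R_0 - 1) t).  Choosing
   T = log(1/r) / (1 - R_0) makes this at most r.  Invariance and comparison
   follow from Gronwall's lemma for the energy sum_i min(z_i, 0)^2 of the
   negative part of z = v, z = 1 - v and z = w - v respectively. *)

Section Gronwall.
Context {R : realType}.

Lemma is_derive_expR_mulN (K s : R) :
  is_derive s 1 (fun u : R => expR (- (K * u))) (expR (- (K * s)) * - K).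
Proof.
have dlin : is_derive s 1 (fun u : R => - (K * u)) (- K).
  have := is_deriveN (is_deriveZ K (is_derive_id s (1 : R))).
  by rewrite /GRing.scale /= mulr1.
exact: (is_derive1_comp _ dlin).
Qed.

Lemma gronwall (f df : R -> R) (K T : R) :
  f x @[x --> (0:R)^'+] --> f 0 ->
  (forall t : R, 0 < t -> is_derive t 1 f (df t)) ->
  (forall t : R, 0 < t < T -> df t <= K * f t) ->
  forall t : R, 0 <= t <= T -> f t <= f 0 * expR (K * t).
Proof.
move=> f0 fd fle t /andP[t0 tT].
pose g s := f s * expR (- (K * s)).
have gd (s : R) : 0 < s ->
    is_derive s 1 g (expR (- (K * s)) * (df s - K * f s)).
  move=> s0; have := is_deriveM (fd s s0) (is_derive_expR_mulN K s).
  by move=> d; apply: is_derive_eq d _; rewrite /GRing.scale /=; ring.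
have gc_ray : {within `[0, +oo[, continuous g}.
  apply/continuous_within_itvcyP; split.
    move=> u; rewrite in_itv /= andbT => u0; have [dg _] := gd u u0.
    exact/differentiable_continuous/derivable1_diffP.
  apply: cvgM => //; have [de _] := is_derive_expR_mulN K 0.
  exact: cvg_within_filter (differentiable_continuous (proj1 (derivable1_diffP _ _) de)).
have gc : {within `[0, T], continuous g}.
  by apply: continuous_subspaceW gc_ray => u /=; rewrite !in_itv /= => /andP[->].
have g_nincr : g t <= g 0.
  apply: (@ler0_derive1_le_cc R g 0 T _ _ gc);
    rewrite ?in_itv /= ?lexx ?t0 ?tT ?(le_trans t0 tT) //.
    by move=> u; rewrite in_itv /= => /andP[u0 _]; have [] := gd u u0.
  move=> u; rewrite in_itv /= => /andP[u0 uT]; rewrite derive1E.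
  have [_ ->] := gd u u0.
  by rewrite mulr_ge0_le0 ?expR_ge0 // subr_le0 fle ?u0.
have -> : f t = g t * expR (K * t).
  by rewrite /g -mulrA -expRD addNr expR0 mulr1.
have -> : f 0 = g 0 by rewrite /g mulr0 oppr0 expR0 mulr1.
by apply: ler_wpM2r => //; exact: expR_ge0.
Qed.

Lemma sum_sqr_gronwall (N : nat) (x dx : R -> 'I_N -> R) (K T : R) :
  (forall i, (fun s => x s i) y @[y --> (0:R)^'+] --> x 0 i) ->
  (forall i (t : R), 0 < t -> is_derive t 1 (fun s => x s i) (dx t i)) ->
  (forall t : R, 0 < t < T -> \sum_i x t i * dx t i <= K * \sum_i x t i ^+ 2) ->
  forall t : R, 0 <= t <= T ->
  \sum_i x t i ^+ 2 <= (\sum_i x 0 i ^+ 2) * expR (2 * K * t).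
Proof.
move=> xc xd hK; pose E s := \sum_i x s i ^+ 2.
have Ed (s : R) : 0 < s -> is_derive s 1 E (\sum_i 2 * x s i * dx s i).
  move=> s0; have -> : E = \sum_i ((fun s => x s i) * (fun s => x s i)).
    by apply/funext => u; rewrite /E fct_sumE; apply: eq_bigr => i _; rewrite expr2.
  apply: is_derive_sum => i; have := is_deriveM (xd i s s0) (xd i s s0).
  by move=> d; apply: is_derive_eq d _; rewrite /GRing.scale /=; ring.
have Ec : E y @[y --> (0:R)^'+] --> E 0.
  apply: cvg_big => // [|i _]; first exact: add_continuous.
  exact: (cvgM (xc i) (xc i)).
have dE_le (u : R) : 0 < u < T -> \sum_i 2 * x u i * dx u i <= 2 * K * E u.
  move=> uI; under eq_bigr do rewrite -mulrA.
  by rewrite -mulr_sumr -mulrA ler_pM2l // hK.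
exact: (gronwall _ _ _ _ Ec Ed dE_le).
Qed.

End Gronwall.

Section NegativePart.
Context {R : realType}.

Definition negpart (s : R) : R := Num.min s 0.

Lemma negpart_le (s : R) : negpart s <= s.
Proof. by rewrite ge_min lexx. Qed.

Lemma negpart_le0 (s : R) : negpart s <= 0.
Proof. by rewrite ge_min lexx orbT. Qed.

Lemma ger0_negpart (s : R) : 0 <= s -> negpart s = 0.
Proof. exact: min_r. Qed.

Lemma ltr0_negpart (s : R) : s < 0 -> negpart s = s.
Proof. by move/ltW; exact: min_l. Qed.

Lemma is_derive_negpart_sqr (s : R) :
  is_derive s 1 (fun u : R => negpart u ^+ 2) (2 * negpart s).
Proof.
have [s0|s0|->] := ltgtP s 0.
- have dsqr : is_derive s 1 (fun u : R => u ^+ 2) (2 * s).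
    have := is_deriveX 2 (is_derive_id s (1 : R)).
    by move=> d; apply: is_derive_eq d _; rewrite /GRing.scale /=; ring.
  rewrite ltr0_negpart //; apply: near_eq_is_derive dsqr.
  near=> u; rewrite ltr0_negpart //.
  near: u; exact: lt_nbhsl s0.
- rewrite ger0_negpart ?ltW // mulr0.
  apply: near_eq_is_derive (is_derive_cst (0 : R) s 1).
  near=> u; rewrite ger0_negpart ?expr0n //.
  apply: ltW; near: u; exact: lt_nbhsr s0.
- rewrite ger0_negpart // mulr0.
  suff q0 : (fun h : R => h^-1 *: (((fun u : R => negpart u ^+ 2) \o shift 0) (h *: 1)
      - negpart 0 ^+ 2)) @ (0:R)^' --> (0:R).
    by split; [apply/cvg_ex; exists 0 | exact: cvg_lim].
  (* the difference quotient is [h] for [h < 0] and [0] for [h > 0] *)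
  apply/cvgrPdist_lt => e e0; near=> h.
  rewrite /= sub0r normrN addr0 /GRing.scale /= mulr1 (ger0_negpart _ (lexx 0)) expr0n subr0.
  have [h0|h0] := ltP h 0; last by rewrite ger0_negpart // expr0n mulr0 normr0.
  rewrite ltr0_negpart // expr2 mulrA mulVf ?lt_eqF // mul1r.
  near: h; exact: dnbhs0_lt.
Unshelve. all: by end_near.
Qed.

(* The energy [sum_i negpart (x i) ^+ 2] of the negative part vanishes at [0]
   and, by the hypothesis and Gronwall's lemma, stays [0]. *)
Lemma nonneg_invariant (N : nat) (x dx : R -> 'I_N -> R) (K T : R) :
  (forall i, (fun s => x s i) y @[y --> (0:R)^'+] --> x 0 i) ->
  (forall i (t : R), 0 < t -> is_derive t 1 (fun s => x s i) (dx t i)) ->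
  (forall i, 0 <= x 0 i) ->
  (forall t : R, 0 < t < T ->
     \sum_i negpart (x t i) * dx t i <= K * \sum_i negpart (x t i) ^+ 2) ->
  forall t : R, 0 <= t <= T -> forall i, 0 <= x t i.
Proof.
move=> xc xd x0 hK t tT i.
pose Phi s := \sum_i negpart (x s i) ^+ 2.
have Phi_d (s : R) : 0 < s -> is_derive s 1 Phi (\sum_i 2 * negpart (x s i) * dx s i).
  move=> s0; have -> : Phi = \sum_i ((fun u : R => negpart u ^+ 2) \o (fun s => x s i)).
    by apply/funext => u; rewrite /Phi fct_sumE.
  apply: is_derive_sum => j.
  exact: is_derive1_comp (is_derive_negpart_sqr _) (xd j s s0).
have Phi_c : Phi y @[y --> (0:R)^'+] --> Phi 0.
  apply: cvg_big => // [|j _]; first exact: add_continuous.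
  apply: (@continuous_cvg _ _ _ _ _ (fun s => x s j) (fun u : R => negpart u ^+ 2)) => //.
  have [d _] := is_derive_negpart_sqr (x 0 j).
  exact/differentiable_continuous/derivable1_diffP.
have Phi0 : Phi 0 = 0 by apply: big1 => j _; rewrite ger0_negpart ?expr0n.
have Phi_t : Phi t <= 0.
  rewrite -(mul0r (expR (2 * K * t))) -Phi0.
  apply: (gronwall _ _ _ _ Phi_c Phi_d _ t tT) => u uT.
  under eq_bigr do rewrite -mulrA.
  by rewrite -mulr_sumr -mulrA ler_pM2l // hK.
have /psumr_eq0P : Phi t = 0 by apply/le_anti; rewrite Phi_t sumr_ge0 // => j _; exact: sqr_ge0.
move=> /(_ (fun j _ => sqr_ge0 _) i isT) /eqP; rewrite sqrf_eq0 => /eqP negpart_eq0.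
rewrite leNgt; apply/negP => xi0; move: negpart_eq0.
by rewrite ltr0_negpart // => /eqP; rewrite lt_eqF.
Qed.

End NegativePart.

Lemma bounded_on_cc (R : realType) (N : nat) (x : R -> 'I_N -> R) (T : R) :
  (forall i, (fun s => x s i) y @[y --> (0:R)^'+] --> x 0 i) ->
  (forall i (t : R), 0 < t -> derivable (fun s => x s i) t 1) ->
  0 <= T -> exists M : R, forall t : R, 0 <= t <= T -> forall j, `|x t j| <= M.
Proof.
move=> xc xd T0.
pose f s := \sum_j `|x s j|.
have fc_ray : {within `[0, +oo[, continuous f}.
  apply/continuous_within_itvcyP; split.
    move=> u; rewrite in_itv /= andbT => u0.
    apply: cvg_big => // [|j _]; first exact: add_continuous.
    apply: (@continuous_cvg _ _ _ _ _ (fun s => x s j) (@Num.norm _ R)).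
      exact: norm_continuous.
    exact/differentiable_continuous/derivable1_diffP/xd.
  apply: cvg_big => // [|j _]; first exact: add_continuous.
  apply: (@continuous_cvg _ _ _ _ _ (fun s => x s j) (@Num.norm _ R)) => //.
  exact: norm_continuous.
have fc : {within `[0, T], continuous f}.
  by apply: continuous_subspaceW fc_ray => u /=; rewrite !in_itv /= => /andP[->].
have [c _ fc_max] := EVT_max T0 fc.
exists (f c) => t tT j; apply: le_trans (fc_max t _); last by rewrite in_itv.
by rewrite /f (bigD1 j) //= lerDl sumr_ge0.
Qed.

Section FiniteSums.
Context {R : realType}.

Lemma mul_le_sqr_half (c p q : R) :
  0 <= c <= 1 -> c * (p * q) <= (p ^+ 2 + q ^+ 2) / 2.
Proof.
move=> /andP[c0 c1].
have pq_le : p * q <= (p ^+ 2 + q ^+ 2) / 2.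
  have -> : (p ^+ 2 + q ^+ 2) / 2 = p * q + (p - q) ^+ 2 / 2 by rewrite sqrrB; field.
  by rewrite lerDl divr_ge0 ?sqr_ge0.
have [pq0|pq0] := leP 0 (p * q); first by apply: le_trans pq_le; rewrite ler_piMl.
apply: (@le_trans _ _ 0); first by rewrite mulr_ge0_le0 // ltW.
by rewrite divr_ge0 // addr_ge0 // sqr_ge0.
Qed.

Lemma sum_mul_le_sum_sqr (N : nat) (c : 'I_N -> 'I_N -> R) (m : 'I_N -> R) :
  (forall i j, 0 <= c i j <= 1) ->
  \sum_i \sum_j c i j * (m i * m j) <= N%:R * \sum_i m i ^+ 2.
Proof.
move=> c01; apply: (@le_trans _ _ (\sum_i \sum_j (m i ^+ 2 + m j ^+ 2) / 2)).
  by do 2![apply: ler_sum => ? _]; exact: mul_le_sqr_half.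
under eq_bigr do rewrite -mulr_suml big_split /= sumr_const card_ord.
rewrite -mulr_suml big_split /= sumr_const card_ord sumrMnl.
rewrite le_eqVlt; apply/orP; left; apply/eqP; set S := \sum_i _.
by rewrite -mulr_natl -mulr2n -[S *+ N *+ 2]mulr_natl -[S *+ N]mulr_natl; field.
Qed.

Lemma sqr_sum_le (N : nat) (x : 'I_N -> R) :
  (\sum_i x i) ^+ 2 <= N%:R * \sum_i x i ^+ 2.
Proof.
have -> : (\sum_i x i) ^+ 2 = \sum_i \sum_j 1 * (x i * x j).
  rewrite expr2 mulr_suml; apply: eq_bigr => i _; rewrite mulr_sumr.
  by apply: eq_bigr => j _; rewrite mul1r.
by apply: sum_mul_le_sum_sqr => i j; rewrite ler01 lexx.
Qed.

Lemma norm_sum_mul_le (N : nat) (a y : 'I_N -> R) (M : R) :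
  (forall j, 0 <= a j <= 1) -> (forall j, `|y j| <= M) ->
  `|\sum_j a j * y j| <= N%:R * M.
Proof.
move=> a01 yM; apply: le_trans (ler_norm_sum _ _ _) _.
apply: (@le_trans _ _ (\sum_(j < N) M)); last by rewrite sumr_const card_ord mulr_natl.
apply: ler_sum => j _; have /andP[a0 a1] := a01 j.
by rewrite normrM ger0_norm //; apply: le_trans (yM j); rewrite ler_piMl.
Qed.

End FiniteSums.

Section Rayleigh.
Local Open Scope sesquilinear_scope.
Local Open Scope complex_scope.
Context {R : realType} {N : nat} (A : 'M[R]_N) (lam : R).
Hypotheses (symA : forall i j, A i j = A j i)
           (lam_ub : forall a, eigenvalue A a -> a <= lam).

Let B := map_mx (real_complex R) A.

Let B_hermsym : B \is hermsymmx.
Proof.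
apply: realsym_hermsym.
  by apply/is_hermitianmxP; rewrite expr0 scale1r; apply/matrixP => i j; rewrite !mxE /= symA.
by apply/mxOverP => i j; rewrite mxE; apply/complex_realP; eexists.
Qed.

Lemma spectral_diag_le (k : 'I_N) : spectral_diag B 0 k <= lam%:C.
Proof.
have /orthomx_spectralP eqB := hermitian_normalmx B_hermsym.
set P := spectralmx B in eqB; set D := spectral_diag B in eqB *.
have PPt : P *m P^t* = 1%:M by apply/unitarymxP; exact: spectral_unitarymx.
have Dk : D 0 k \is Num.real by exact: (mxOverP (hermitian_spectral_diag_real B_hermsym)).
rewrite -(RRe_real Dk) lecR; apply: lam_ub.
(* [D_k] is a (real) eigenvalue of [B], with eigenvector the [k]-th row of [P] *)
rewrite eigenvalue_root_char -(fmorph_root (real_complex R)) map_char_poly.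
rewrite -eigenvalue_root_char [X in eigenvalue _ X](RRe_real Dk) -/B.
apply/eigenvalueP; exists (row k P).
  rewrite eqB (invmx_unitary (spectral_unitarymx B)) !mulmxA -!row_mul PPt mul1mx.
  by rewrite row_mul row_diag_mx -scalemxAl -rowE.
apply/negP => /eqP Pk0.
have : row k (P *m P^t*) = 0 by rewrite row_mul Pk0 mul0mx.
by rewrite PPt => /rowP /(_ k); rewrite !mxE eqxx /= => /eqP; rewrite oner_eq0.
Qed.

Lemma rayleigh_bound (x : 'I_N -> R) :
  \sum_i x i * (\sum_j A i j * x j) <= lam * \sum_i x i ^+ 2.
Proof.
have /orthomx_spectralP eqB := hermitian_normalmx B_hermsym.
set P := spectralmx B in eqB; set D := spectral_diag B in eqB.
have iP : invmx P = P^t* := invmx_unitary (spectral_unitarymx B).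
have PtP : P^t* *m P = 1%:M by rewrite -iP mulVmx // spectral_unit.
pose xc : 'rV[R[i]]_N := \row_i (x i)%:C.
pose y := xc *m P^t*.
pose d : 'rV_N := \row_k (lam%:C - D 0 k).
(* in the eigenbasis, [lam |x|^2 - x^T A x = sum_k (lam - D_k) |y_k|^2] *)
have y_form_ge0 : 0 <= (y *m diag_mx d *m y^t*) 0 0.
  rewrite mxE; apply: sumr_ge0 => j _; rewrite mul_mx_diag !mxE mulrAC.
  by apply: mulr_ge0; [exact: mul_conjC_ge0 | rewrite subr_ge0 spectral_diag_le].
have diag_d : diag_mx d = lam%:C%:M - diag_mx D.
  by apply/matrixP => i j; rewrite !mxE mulrnBl.
have y_form : y *m diag_mx d *m y^t* = lam%:C *: (xc *m xc^t*) - xc *m B *m xc^t*.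
  rewrite diag_d (_ : y^t* = P *m xc^t*); last by rewrite /y trmx_mul map_mxM trmxCK.
  rewrite eqB iP /y mulmxBr mulmxBl mul_mx_scalar -!mulmxA.
  by rewrite -scalemxAl !mulmxA -(mulmxA xc) PtP mulmx1.
have xc_real i : (x i)%:C \is Num.real by apply/complex_realP; eexists.
have sqr_form : (xc *m xc^t*) 0 0 = (\sum_i x i ^+ 2)%:C.
  rewrite !mxE rmorph_sum; apply: eq_bigr => i _.
  by rewrite !mxE conj_Creal // rmorphXn.
have A_form : (xc *m B *m xc^t*) 0 0 = (\sum_i x i * \sum_j A i j * x j)%:C.
  rewrite -mulmxA !mxE rmorph_sum; apply: eq_bigr => i _; rewrite !mxE rmorphM rmorph_sum.
  by congr (_ * _); apply: eq_bigr => j _; rewrite !mxE conj_Creal ?rmorphM.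
have entry : (lam%:C *: (xc *m xc^t*) - xc *m B *m xc^t*) 0 0 =
    lam%:C * (xc *m xc^t*) 0 0 - (xc *m B *m xc^t*) 0 0 by rewrite !mxE.
by move: y_form_ge0; rewrite y_form entry sqr_form A_form -rmorphM -rmorphB ler0c subr_ge0.
Qed.

End Rayleigh.

Section Nimfa.
Context {R : realType} {N : nat} (A : 'M[R]_N) (tau : R).
Hypotheses (adjA : simple_adjacency A) (tau_ge0 : 0 <= tau).

Definition nimfa_field (x : 'I_N -> R) (i : 'I_N) : R :=
  - x i + tau * (1 - x i) * \sum_j A i j * x j.

Let A01 i j : 0 <= A i j <= 1.
Proof. by case: adjA => _ _ /(_ i j) [] ->; rewrite ?lexx ?ler01. Qed.

Let A_ge0 i j : 0 <= A i j.
Proof. by case/andP: (A01 i j). Qed.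

Let adj_sum_ge (x : 'I_N -> R) (M : R) i :
  (forall j, `|x j| <= M) -> - \sum_j A i j * x j <= N%:R * M.
Proof.
move=> xM; apply: le_trans (ler_norm _) _; rewrite normrN.
by apply: norm_sum_mul_le => // j; exact: A01.
Qed.

Let adj_form_le (m : 'I_N -> R) :
  \sum_i \sum_j A i j * (m i * m j) <= N%:R * \sum_i m i ^+ 2.
Proof. by apply: sum_mul_le_sum_sqr => i j; exact: A01. Qed.

Lemma negpart_mul_field_le (x : 'I_N -> R) (M : R) (i : 'I_N) :
  (forall j, `|x j| <= M) ->
  negpart (x i) * nimfa_field x i <= tau * N%:R * M * negpart (x i) ^+ 2
    + tau * \sum_j A i j * (negpart (x i) * negpart (x j)).
Proof.
move=> xM; have [xi0|xi0] := leP 0 (x i).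
  rewrite ger0_negpart // mul0r expr0n mulr0 add0r big1 ?mulr0 // => j _.
  by rewrite mul0r mulr0.
rewrite ltr0_negpart // /nimfa_field.
set s := \sum_j A i j * x j.
have xs_le : x i * s <= \sum_j A i j * (x i * negpart (x j)).
  rewrite /s mulr_sumr; apply: ler_sum => j _; rewrite mulrCA.
  by apply: ler_wpM2l => //; apply: ler_wnM2l; [exact: ltW | exact: negpart_le].
have -> : x i * (- x i + tau * (1 - x i) * s) =
    tau * (x i ^+ 2 * - s) + (- x i ^+ 2 + tau * (x i * s)) by ring.
apply: lerD.
  rewrite (_ : _ * _ * M * _ = tau * (x i ^+ 2 * (N%:R * M))); last by ring.
  by do 2!apply: ler_wpM2l => //; [exact: sqr_ge0 | exact: adj_sum_ge].
rewrite -[X in _ <= X]add0r; apply: lerD; first by rewrite oppr_le0 sqr_ge0.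
exact: ler_wpM2l.
Qed.

Lemma negpart_sub1_mul_field_le (x : 'I_N -> R) (M : R) (i : 'I_N) :
  (forall j, `|x j| <= M) ->
  negpart (1 - x i) * - nimfa_field x i <= tau * N%:R * M * negpart (1 - x i) ^+ 2.
Proof.
move=> xM; have [zi0|zi0] := leP 0 (1 - x i).
  by rewrite ger0_negpart // mul0r expr0n mulr0.
rewrite ltr0_negpart // /nimfa_field.
set s := \sum_j A i j * x j; set z := 1 - x i in zi0 *.
have -> : z * - (- x i + tau * z * s) = (z - z ^+ 2) + tau * (z ^+ 2 * - s).
  by rewrite /z; ring.
rewrite -[X in _ <= X]add0r; apply: lerD; first by rewrite subr_le0; nra.
rewrite (_ : _ * _ * M * _ = tau * (z ^+ 2 * (N%:R * M))); last by ring.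
by do 2!apply: ler_wpM2l => //; [exact: sqr_ge0 | exact: adj_sum_ge].
Qed.

Lemma negpart_sub_mul_field_le (v w : 'I_N -> R) (k : 'I_N) :
  (forall j, 0 <= v j) -> 0 <= w k <= 1 ->
  negpart (w k - v k) * (nimfa_field w k - nimfa_field v k) <=
  tau * \sum_j A k j * (negpart (w k - v k) * negpart (w j - v j)).
Proof.
move=> v_ge0 /andP[wk0 wk1]; have [dk|dk] := leP 0 (w k - v k).
  rewrite ger0_negpart // mul0r big1 ?mulr0 // => j _.
  by rewrite mul0r mulr0.
rewrite ltr0_negpart // /nimfa_field.
set sv := \sum_j A k j * v j; set sw := \sum_j A k j * w j.
set d := w k - v k in dk *; set S := \sum_j A k j * (d * _).
have sv_ge0 : 0 <= sv by apply: sumr_ge0 => j _; rewrite mulr_ge0.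
have cross_le : d * (sw - sv) <= S.
  rewrite /sw /sv -sumrB mulr_sumr; apply: ler_sum => j _.
  rewrite -mulrBr mulrCA; apply: ler_wpM2l => //.
  by apply: ler_wnM2l; [exact: ltW | exact: negpart_le].
have S_ge0 : 0 <= S.
  by apply: sumr_ge0 => j _; rewrite mulr_ge0 // mulr_le0 ?negpart_le0 // ltW.
have -> : d * (- w k + tau * (1 - w k) * sw - (- v k + tau * (1 - v k) * sv)) =
    - (d ^+ 2 + tau * (d ^+ 2 * sv)) + tau * ((1 - w k) * (d * (sw - sv))).
  by rewrite /d; ring.
rewrite -[X in _ <= X]add0r; apply: lerD.
  rewrite oppr_le0; apply: addr_ge0; first exact: sqr_ge0.
  by rewrite mulr_ge0 // mulr_ge0 // sqr_ge0.
apply: ler_wpM2l => //; apply: (@le_trans _ _ ((1 - w k) * S)).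
  by apply: ler_wpM2l; rewrite ?subr_ge0.
by rewrite ler_piMl // lerBlDr lerDl.
Qed.

Let sol_bounded {v : R -> 'I_N -> R} {t : R} :
  nimfa_solution A tau v -> 0 <= t ->
  exists M : R, forall s : R, 0 < s < t + 1 -> forall j, `|v s j| <= M.
Proof.
move=> [vc vd] t0.
have vdiff i (s : R) : 0 < s -> derivable (fun u => v u i) s 1.
  by move=> s0; have [] := vd i s s0.
have [M vM] := @bounded_on_cc R N v (t + 1) vc vdiff (addr_ge0 t0 ler01).
by exists M => s /andP[s0 s1]; apply: vM; rewrite !ltW.
Qed.

Lemma nimfa_sol_ge0 {v : R -> 'I_N -> R} :
  nimfa_solution A tau v -> (forall i, 0 <= v 0 i) ->
  forall t : R, 0 <= t -> forall i, 0 <= v t i.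
Proof.
move=> vs v0 t t0; have [M vM] := sol_bounded vs t0; case: vs => vc vd.
apply: (@nonneg_invariant R N v (fun s => nimfa_field (v s))
  (tau * N%:R * M + tau * N%:R) (t + 1) vc vd v0); last by rewrite t0 /= lerDl.
move=> u uI; apply: (@le_trans _ _ (\sum_i (tau * N%:R * M * negpart (v u i) ^+ 2
    + tau * \sum_j A i j * (negpart (v u i) * negpart (v u j))))).
  by apply: ler_sum => i _; apply: negpart_mul_field_le; exact: vM.
rewrite big_split /= -!mulr_sumr mulrDl; apply: lerD => //.
by rewrite -mulrA; apply: ler_wpM2l => //; exact: adj_form_le.
Qed.

Lemma nimfa_sol_le1 {v : R -> 'I_N -> R} :
  nimfa_solution A tau v -> (forall i, v 0 i <= 1) ->
  forall t : R, 0 <= t -> forall i, v t i <= 1.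
Proof.
move=> vs v1 t t0 i; have [M vM] := sol_bounded vs t0; case: vs => vc vd.
have zc j : (fun s => 1 - v s j) y @[y --> (0:R)^'+] --> 1 - v 0 j.
  by apply: cvgB => //; exact: cvg_cst.
have zd j (s : R) : 0 < s -> is_derive s 1 (fun u => 1 - v u j) (- nimfa_field (v s) j).
  move=> s0; have := is_deriveB (is_derive_cst (1 : R) s 1) (vd j s s0).
  by move=> d; apply: is_derive_eq d _; rewrite sub0r.
rewrite -subr_ge0; apply: (@nonneg_invariant R N (fun s j => 1 - v s j)
  (fun s j => - nimfa_field (v s) j) (tau * N%:R * M) (t + 1) zc zd).
- by move=> j; rewrite subr_ge0.
- move=> u uI; rewrite mulr_sumr; apply: ler_sum => j _.
  apply: negpart_sub1_mul_field_le; exact: vM.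
- by rewrite t0 /= lerDl.
Qed.

Lemma nimfa_sol_le (v w : R -> 'I_N -> R) :
  nimfa_solution A tau v -> nimfa_solution A tau w ->
  (forall i, 0 <= v 0 i) -> (forall i, 0 <= w 0 i <= 1) ->
  (forall i, v 0 i <= w 0 i) ->
  forall t : R, 0 <= t -> forall i, v t i <= w t i.
Proof.
move=> vs ws v0 w01 vw0 t t0 i.
have v_ge0 := nimfa_sol_ge0 vs v0.
have w_ge0 := nimfa_sol_ge0 ws (fun j => proj1 (andP (w01 j))).
have w_le1 := nimfa_sol_le1 ws (fun j => proj2 (andP (w01 j))).
case: vs => vc vd; case: ws => wc wd.
have dc j : (fun s => w s j - v s j) y @[y --> (0:R)^'+] --> w 0 j - v 0 j.
  exact: cvgB.
have dd j (s : R) : 0 < s -> is_derive s 1 (fun u => w u j - v u j)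
    (nimfa_field (w s) j - nimfa_field (v s) j).
  by move=> s0; exact: is_deriveB (wd j s s0) (vd j s s0).
rewrite -subr_ge0; apply: (@nonneg_invariant R N (fun s j => w s j - v s j)
  (fun s j => nimfa_field (w s) j - nimfa_field (v s) j) (tau * N%:R) (t + 1) dc dd).
- by move=> j; rewrite subr_ge0.
- move=> u /andP[u0 _]; apply: (@le_trans _ _
    (\sum_k tau * \sum_j A k j * (negpart (w u k - v u k) * negpart (w u j - v u j)))).
    apply: ler_sum => k _; apply: negpart_sub_mul_field_le; first by apply: v_ge0; exact: ltW.
    by rewrite w_ge0 ?w_le1 ?ltW.
  by rewrite -mulr_sumr -mulrA; apply: ler_wpM2l => //; exact: adj_form_le.
- by rewrite t0 /= lerDl.
Qed.

Lemma nimfa_field_energy_le (lam : R) (x : 'I_N -> R) :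
  (forall a, eigenvalue A a -> a <= lam) -> (forall i, 0 <= x i) ->
  \sum_i x i * nimfa_field x i <= (tau * lam - 1) * \sum_i x i ^+ 2.
Proof.
move=> lam_ub x_ge0; have symA : forall i j, A i j = A j i by case: adjA.
apply: (@le_trans _ _ (\sum_i (- x i ^+ 2 + tau * (x i * \sum_j A i j * x j)))).
  apply: ler_sum => i _; rewrite /nimfa_field; set s := \sum_j A i j * x j.
  have s_ge0 : 0 <= s by apply: sumr_ge0 => j _; rewrite mulr_ge0.
  have -> : x i * (- x i + tau * (1 - x i) * s) =
      - x i ^+ 2 + tau * (x i * s) - tau * (x i ^+ 2 * s) by ring.
  by rewrite lerBlDr lerDl !mulr_ge0 // sqr_ge0.
rewrite big_split /= sumrN -mulr_sumr.
rewrite (_ : (tau * lam - 1) * _ = - \sum_i x i ^+ 2 + tau * (lam * \sum_i x i ^+ 2)); last by ring.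
by apply: lerD => //; apply: ler_wpM2l => //; apply: rayleigh_bound.
Qed.

Lemma nimfa_energy_le {lam : R} {v : R -> 'I_N -> R} :
  (forall a, eigenvalue A a -> a <= lam) ->
  nimfa_solution A tau v -> (forall i, 0 <= v 0 i) ->
  forall t : R, 0 <= t ->
  \sum_i v t i ^+ 2 <= (\sum_i v 0 i ^+ 2) * expR (2 * (tau * lam - 1) * t).
Proof.
move=> lam_ub vs v0 t t0; have v_ge0 := nimfa_sol_ge0 vs v0; case: vs => vc vd.
apply: (@sum_sqr_gronwall R N v (fun s => nimfa_field (v s)) _ (t + 1) vc vd).
  move=> u /andP[u0 _]; apply: nimfa_field_energy_le => // i.
  by apply: v_ge0; exact: ltW.
by rewrite t0 /= lerDl.
Qed.

Lemma nimfa_prevalence_le_exp (lam : R) (v : R -> 'I_N -> R) :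
  (forall a, eigenvalue A a -> a <= lam) ->
  nimfa_solution A tau v -> (forall i, 0 <= v 0 i <= 1) ->
  forall t : R, 0 <= t -> prevalence v t <= expR ((tau * lam - 1) * t).
Proof.
move=> lam_ub vs v01 t t0.
have v0 i : 0 <= v 0 i by case/andP: (v01 i).
have v_ge0 := nimfa_sol_ge0 vs v0.
have E0 : \sum_i v 0 i ^+ 2 <= N%:R.
  apply: (@le_trans _ _ (\sum_(i < N) 1)); last by rewrite sumr_const card_ord.
  by apply: ler_sum => i _; have /andP[? ?] := v01 i; exact: exprn_ile1.
rewrite /prevalence; have [N0|N_gt0] := posnP N.
  by rewrite (_ : N%:R = 0 :> R) ?invr0 ?mulr0 ?expR_ge0 // N0.
have N_pos : 0 < N%:R :> R by rewrite ltr0n.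
(* square both sides: Cauchy-Schwarz bounds [y^2] by the energy divided by [N] *)
have prev_ge0 : 0 <= (\sum_i v t i) / N%:R.
  by rewrite divr_ge0 ?ler0n // sumr_ge0 // => i _; exact: v_ge0.
rewrite -ler_sqr ?nnegrE ?expR_ge0 //.
have -> : expR ((tau * lam - 1) * t) ^+ 2 = expR (2 * (tau * lam - 1) * t).
  by rewrite expr2 -expRD; congr expR; ring.
rewrite expr_div_n ler_pdivrMr ?exprn_gt0 //; apply: le_trans (sqr_sum_le _ (v t)) _.
apply: (@le_trans _ _ (N%:R * (N%:R * expR (2 * (tau * lam - 1) * t)))).
  apply: ler_wpM2l => //; apply: le_trans (nimfa_energy_le lam_ub vs v0 _ t0) _.
  by apply: ler_wpM2r => //; exact: expR_ge0.
by rewrite le_eqVlt; apply/orP; left; apply/eqP; ring.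
Qed.

End Nimfa.

Theorem lemma2 (R : realType) (N : nat) (A : 'M[R]_N) (tau lam : R) :
  simple_adjacency A ->
  largest_eigenvalue A lam ->
  0 < tau -> tau * lam < 1 ->
  (forall (v w : R -> 'I_N -> R),
     nimfa_solution A tau v -> nimfa_solution A tau w ->
     (forall i, 0 <= v 0 i <= 1) -> (forall i, w 0 i = 1) ->
     forall t, 0 <= t ->
       prevalence v t <= prevalence w t /\
       prevalence w t <= expR ((tau * lam - 1) * t)) /\
  (forall r : R, 0 < r < 1 ->
     exists T : R,
       0 <= T <= (1 - tau * lam)^-1 * ln (r^-1) /\
       (forall v : R -> 'I_N -> R,
          nimfa_solution A tau v -> (forall i, r <= v 0 i <= 1) ->
          `|prevalence v T - 0| <= r)).
Proof.
move=> adjA [_ lam_ub] tau_gt0 R0_lt1; have tau_ge0 := ltW tau_gt0.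
split=> [v w vs ws v01 w1 t t0 | r /andP[r0 r1]].
  have w01 i : 0 <= w 0 i <= 1 by rewrite w1 ler01 lexx.
  have v0 i : 0 <= v 0 i by case/andP: (v01 i).
  have vw0 i : v 0 i <= w 0 i by rewrite w1; case/andP: (v01 i).
  split; last by apply: (nimfa_prevalence_le_exp A).
  rewrite /prevalence; apply: ler_wpM2r; first by rewrite invr_ge0 ler0n.
  by apply: ler_sum => i _; apply: (nimfa_sol_le A tau).
set T := (1 - tau * lam)^-1 * ln r^-1.
have T_ge0 : 0 <= T by rewrite mulr_ge0 ?invr_ge0 ?subr_ge0 ?ltW // ln_gt0 // invf_gt1.
exists T; split=> [|v vs vr]; first by rewrite T_ge0 lexx.
have v01 i : 0 <= v 0 i <= 1 by have /andP[rv ->] := vr i; rewrite (le_trans (ltW r0)).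
have prev_ge0 : 0 <= prevalence v T.
  rewrite /prevalence divr_ge0 ?ler0n // sumr_ge0 // => i _.
  by apply: (nimfa_sol_ge0 A tau) => // j; case/andP: (v01 j).
have prev_le : prevalence v T <= expR ((tau * lam - 1) * T).
  exact: (nimfa_prevalence_le_exp A).
rewrite subr0 ger0_norm //; apply: le_trans prev_le _.
have -> : (tau * lam - 1) * T = - ln r^-1 by rewrite /T; field; rewrite subr_eq0 gt_eqF.
by rewrite expRN lnK ?invrK // posrE invr_gt0.
Qed.
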